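(* Let $D=\mathrm{diag}(d_1,\dots,d_n)$ be a complex diagonal matrix and let $X\in\mathbb{C}^{n\times n}$. Then for every $k=1,\dots,n$, \[ \prod_{j=1}^k\sigma_j(X^*DX)\le\prod_{j=1}^k\sigma_j(X^*|D|X), \] where $|D|=\mathrm{diag}(|d_1|,\dots,|d_n|)$.
   Context: For a matrix $Y$, $\sigma_1(Y)\ge\sigma_2(Y)\ge\cdots\ge\sigma_n(Y)$ denote its singular values in nonincreasing order. $X^*$ is the conjugate transpose of $X$, and $|D|=(D^*D)^{1/2}$. *)

From HB Require Import structures.
From mathcomp Require Import all_boot all_order all_algebra.
Set Implicit Arguments. Unset Strict Implicit. Unset Printing Implicit Defensive.
Import Order.TTheory GRing.Theory Num.Theory.
Local Open Scope ring_scope.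

(* Complex matrices are taken over an arbitrary numeric algebraically closed
   field C (e.g. the complex numbers, or algC); conjugation is Num.conj. *)

Definition adjmx (C : numClosedFieldType) (m n : nat) (X : 'M[C]_(m, n)) : 'M[C]_(n, m) :=
  (map_mx Num.conj X)^T.

Definition eigvals (C : numClosedFieldType) (n : nat) (A : 'M[C]_n) : seq C :=
  sval (closed_field_poly_normal (char_poly A)).

Definition sigmas (C : numClosedFieldType) (n : nat) (Y : 'M[C]_n) : seq C :=
  map sqrtC (sort (fun x y : C => y <= x) (eigvals (adjmx Y *m Y))).

(* sigma Y j = sigma_{j+1}(Y) (0-based index) *)
Definition sigma (C : numClosedFieldType) (n : nat) (Y : 'M[C]_n) (j : nat) : C :=
  nth 0 (sigmas Y) j.

From HB Require Import structures.
From mathcomp Require Import all_boot all_order all_algebra all_fingroup.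
From mathcomp Require Import zify.
Import Order.TTheory GRing.Theory Num.Theory.
Local Open Scope ring_scope.
Set Implicit Arguments. Unset Strict Implicit. Unset Printing Implicit Defensive.

(* Write D = E U E with E = |D|^(1/2) and U a diagonal unitary, and put
   P = E X, so that X^* D X = P^* U P and X^* |D| X = P^* P.  If sigma_k(P^* U P)
   vanishes there is nothing to prove.  Otherwise truncating the singular value
   decomposition of A = P^* U P gives isometries W, V : k x n with
   prod_(j <= k) sigma_j(A) = det (W A V^* ) = det (Y Z^* ), where Y = W P^* U and
   Z = V P^*.  The Cauchy-Schwarz inequality for determinants bounds |det (Y Z^* )|^2
   by det (W P^* P W^* ) det (V P^* P V^* ), and by Cauchy interlacing each factor
   is at most prod_(j <= k) sigma_j(P^* P). *)

Section Adjoint.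
Variable C : numClosedFieldType.

Lemma adjmxK m n (M : 'M[C]_(m, n)) : adjmx (adjmx M) = M.
Proof. by apply/matrixP=> i j; rewrite /adjmx !mxE conjCK. Qed.

Lemma adjmxM m n p (A : 'M[C]_(m, n)) (B : 'M[C]_(n, p)) :
  adjmx (A *m B) = adjmx B *m adjmx A.
Proof. by rewrite /adjmx map_mxM trmx_mul. Qed.

Lemma adjmxD m n (A B : 'M[C]_(m, n)) : adjmx (A + B) = adjmx A + adjmx B.
Proof. by rewrite /adjmx map_mxD linearD. Qed.

Lemma adjmx0 m n : adjmx (0 : 'M[C]_(m, n)) = 0.
Proof. by rewrite /adjmx map_mx0 trmx0. Qed.

Lemma adjmx1 n : adjmx (1%:M : 'M[C]_n) = 1%:M.
Proof. by rewrite /adjmx map_mx1 trmx1. Qed.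

Lemma adjmx_row_mx m n1 n2 (A : 'M[C]_(m, n1)) (B : 'M[C]_(m, n2)) :
  adjmx (row_mx A B) = col_mx (adjmx A) (adjmx B).
Proof. by rewrite /adjmx map_row_mx tr_row_mx. Qed.

Lemma adjmx_diag n (d : 'rV[C]_n) : adjmx (diag_mx d) = diag_mx (map_mx Num.conj d).
Proof. by rewrite /adjmx map_diag_mx tr_diag_mx. Qed.

Lemma adjmx_real_diag n (d : 'rV[C]_n) : (forall i, d 0 i \is Num.real) ->
  adjmx (diag_mx d) = diag_mx d.
Proof.
move=> d_real; rewrite adjmx_diag; congr diag_mx; apply/matrixP=> i j.
by rewrite ord1 mxE; apply/CrealP.
Qed.

Lemma adjmx_perm n (s : 'S_n) : adjmx (perm_mx s : 'M[C]_n) = perm_mx s^-1.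
Proof. by rewrite /adjmx map_perm_mx tr_perm_mx. Qed.

Lemma diag_mx_eq1 n (l : 'rV[C]_n) : (forall j, l 0 j = 1) -> diag_mx l = 1%:M.
Proof.
move=> l1; rewrite -diag_const_mx; congr diag_mx.
by apply/matrixP=> i j; rewrite (ord1 i) l1 mxE.
Qed.

Lemma det_adjmx n (M : 'M[C]_n) : \det (adjmx M) = (\det M)^*.
Proof. by rewrite /adjmx det_tr det_map_mx. Qed.

Lemma det_adj_conj n (K S : 'M[C]_n) :
  \det (adjmx K *m S *m K) = `|\det K| ^+ 2 * \det S.
Proof. by rewrite !det_mulmx det_adjmx normCKC mulrAC. Qed.

Lemma adjmxE m n (M : 'M[C]_(m, n)) : adjmx M = (M ^t*)%sesqui.
Proof. by rewrite /adjmx map_trmx. Qed.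

Lemma unitarymx_adjP m n (M : 'M[C]_(m, n)) :
  reflect (M *m adjmx M = 1%:M) (M \is unitarymx).
Proof. by rewrite adjmxE; apply: unitarymxP. Qed.

Lemma unitarymx_mul_adj m n (M : 'M[C]_(m, n)) :
  M \is unitarymx -> M *m adjmx M = 1%:M.
Proof. by move/unitarymx_adjP. Qed.

Lemma unitarymx_adj_mul n (Q : 'M[C]_n) : Q \is unitarymx -> adjmx Q *m Q = 1%:M.
Proof. by move/unitarymx_mul_adj/mulmx1C. Qed.

Lemma det_unitary_conj n (Q S : 'M[C]_n) : Q \is unitarymx ->
  \det (adjmx Q *m S *m Q) = \det S.
Proof.
move=> Qu; have := det_adj_conj Q 1%:M.
rewrite mulmx1 unitarymx_adj_mul // det1 mulr1 => /esym normQ.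
by rewrite det_adj_conj normQ mul1r.
Qed.

Lemma mul_adjmx_diag_entry m n (Y : 'M[C]_(m, n)) i :
  (Y *m adjmx Y) i i = \sum_j `|Y i j| ^+ 2.
Proof. by rewrite !mxE; apply: eq_bigr => j _; rewrite !mxE normCK. Qed.

Lemma mul_adjmx_row_ge0 n (x : 'rV[C]_n) : 0 <= (x *m adjmx x) 0 0.
Proof.
by rewrite mul_adjmx_diag_entry; apply: sumr_ge0 => i _; rewrite exprn_ge0.
Qed.

Lemma mul_adjmx_row_eq0 n (x : 'rV[C]_n) : ((x *m adjmx x) 0 0 == 0) = (x == 0).
Proof.
rewrite mul_adjmx_diag_entry psumr_eq0; last by move=> i _; rewrite exprn_ge0.
apply/idP/eqP => [/allP x0|->]; last first.
  by apply/allP => i _ /=; rewrite mxE normr0 expr0n.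
apply/matrixP=> i j; rewrite ord1 mxE.
by have := x0 j (mem_index_enum j); rewrite sqrf_eq0 normr_eq0 => /eqP.
Qed.

Lemma mul_adjmx_row_gt0 n (x : 'rV[C]_n) : x != 0 -> 0 < (x *m adjmx x) 0 0.
Proof. by move=> x_neq0; rewrite lt_def mul_adjmx_row_eq0 x_neq0 mul_adjmx_row_ge0. Qed.

Lemma quad_diag_row n (x d : 'rV[C]_n) :
  (x *m diag_mx d *m adjmx x) 0 0 = \sum_i d 0 i * `|x 0 i| ^+ 2.
Proof.
rewrite mul_mx_diag !mxE; apply: eq_bigr => i _.
by rewrite !mxE normCK mulrAC mulrC mulrA.
Qed.

End Adjoint.

Section SortedSpectral.
Variable C : numClosedFieldType.
Local Notation ge := (fun x y : C => y <= x).

Definition row_seq n (l : 'rV[C]_n) := [seq l 0 i | i <- enum 'I_n].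

Definition psd_eigen_decomp n (A Q : 'M[C]_n) (l : 'rV[C]_n) :=
  [/\ Q \is unitarymx, A = adjmx Q *m diag_mx l *m Q,
      forall i, 0 <= l 0 i & forall i j : 'I_n, (i <= j)%N -> l 0 j <= l 0 i].

Lemma size_row_seq n (l : 'rV[C]_n) : size (row_seq l) = n.
Proof. by rewrite size_map size_enum_ord. Qed.

Lemma nth_row_seq n (l : 'rV[C]_n) (i : 'I_n) : nth 0 (row_seq l) i = l 0 i.
Proof. by rewrite (nth_map i) ?size_enum_ord // nth_ord_enum. Qed.

Lemma sorted_row_seq n (l : 'rV[C]_n) :
  (forall i j : 'I_n, (i <= j)%N -> l 0 j <= l 0 i) -> sorted ge (row_seq l).
Proof.
move=> l_mono; rewrite sorted_map.
have : sorted (relpre val ltn) (enum 'I_n).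
  by rewrite -sorted_map val_enum_ord iota_ltn_sorted.
by apply: sub_sorted => i j /ltnW; apply: l_mono.
Qed.

Lemma sort_ge_eq (s t : seq C) : perm_eq s t -> all (fun x => x \is Num.real) t ->
  sorted ge t -> sort ge s = t.
Proof.
move=> st t_real t_sorted.
have s_real : all (fun x => x \is Num.real) s by rewrite (perm_all _ st).
apply: (@sorted_eq _ ge).
- by move=> y x z /= xy yz; apply: le_trans yz xy.
- by move=> x y /andP[yx xy]; apply/le_anti; rewrite yx xy.
- apply: (sort_sorted_in (P := fun x : C => x \is Num.real)) => //.
  by move=> x y x_real y_real /=; rewrite orbC; apply: real_leVge.
- exact: t_sorted.
by apply: perm_trans st; rewrite perm_sort.
Qed.

Lemma perm_nonincreasing n (l : 'rV[C]_n) : (forall i, l 0 i \is Num.real) ->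
  exists s : 'S_n, forall i j : 'I_n, (i <= j)%N -> l 0 (s j) <= l 0 (s i).
Proof.
move=> l_real.
have /tuple_permP [s sortE] : perm_eq (sort ge (row_seq l)) [tuple l 0 i | i < n].
  by rewrite perm_sort /row_seq -val_ord_tuple.
have sorted_l : sorted ge (sort ge (row_seq l)).
  apply: (sort_sorted_in (P := fun x : C => x \is Num.real)).
    by move=> x y x_real y_real /=; rewrite orbC; apply: real_leVge.
  by apply/allP => x /mapP [i _ ->].
exists s => i j ij.
have := sorted_leq_nth (fun y x z (xy : y <= x) (yz : z <= y) => le_trans yz xy)
  (@lexx _ _) 0 sorted_l.
rewrite sortE size_tuple => /(_ i j (ltn_ord i) (ltn_ord j) ij).
by rewrite -!tnth_nth !tnth_mktuple.
Qed.

Lemma perm_mx_unitary n (s : 'S_n) : perm_mx s \is @unitarymx C n n.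
Proof. by apply/unitarymx_adjP; rewrite adjmx_perm -perm_mxM mulgV perm_mx1. Qed.

Lemma perm_mx_conj_diag n (s : 'S_n) (l : 'rV[C]_n) :
  perm_mx s *m diag_mx l *m perm_mx s^-1 = diag_mx (\row_i l 0 (s i)).
Proof.
apply/matrixP=> i j; rewrite -row_permE -col_permE !mxE.
by rewrite (inj_eq perm_inj).
Qed.

Lemma gram_psd_eigen_decomp m n (M : 'M[C]_(m, n)) :
  exists Q l, psd_eigen_decomp (adjmx M *m M) Q l.
Proof.
set H := adjmx M *m M.
have /orthomx_spectralP : H \is normalmx.
  by apply/normalmxP; rewrite -adjmxE /H adjmxM adjmxK.
set P := spectralmx H; set sp := spectral_diag H.
have Pu : P \is unitarymx := spectral_unitarymx H.
rewrite invmx_unitary // -adjmxE => HE.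
have sp_ge0 i : 0 <= sp 0 i.
  have : (P *m H *m adjmx P) i i = sp 0 i.
    rewrite HE !mulmxA (unitarymx_mul_adj Pu) mul1mx -mulmxA (unitarymx_mul_adj Pu).
    by rewrite mulmx1 mxE eqxx mulr1n.
  have -> : P *m H *m adjmx P = (P *m adjmx M) *m adjmx (P *m adjmx M).
    by rewrite adjmxM adjmxK !mulmxA.
  by rewrite mul_adjmx_diag_entry => <-; apply: sumr_ge0 => j _; rewrite exprn_ge0.
have [s s_mono] := perm_nonincreasing (fun i => ger0_real (sp_ge0 i)).
exists (perm_mx s *m P), (\row_i sp 0 (s i)); split => [||i|i j ij].
- exact: mul_unitarymx (perm_mx_unitary s) Pu.
- rewrite -perm_mx_conj_diag adjmxM adjmx_perm HE !mulmxA.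
  by rewrite -!(mulmxA _ (perm_mx s^-1) (perm_mx s)) -perm_mxM mulVg perm_mx1 !mulmx1.
- by rewrite mxE.
- by rewrite !mxE s_mono.
Qed.

Lemma det_psd_eigen_decomp n (A Q : 'M[C]_n) (l : 'rV[C]_n) :
  psd_eigen_decomp A Q l -> \det A = \prod_i l 0 i.
Proof. by case=> Qu -> _ _; rewrite det_unitary_conj // det_diag. Qed.

Lemma det_gram_ge0 m n (Y : 'M[C]_(m, n)) : 0 <= \det (Y *m adjmx Y).
Proof.
have [Q [l decomp]] := gram_psd_eigen_decomp (adjmx Y).
rewrite adjmxK in decomp; rewrite (det_psd_eigen_decomp decomp).
by case: decomp => _ _ l_ge0 _; apply: prodr_ge0.
Qed.

Lemma char_poly_unitary_conj n (Q D : 'M[C]_n) : Q \is unitarymx ->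
  char_poly (adjmx Q *m D *m Q) = char_poly D.
Proof.
move=> Qu; have QQ := unitarymx_adj_mul Qu.
rewrite /char_poly /char_poly_mx.
have XE : ('X%:M : 'M[{poly C}]_n) =
    map_mx polyC (adjmx Q) *m 'X%:M *m map_mx polyC Q.
  by rewrite scalar_mxC -mulmxA -map_mxM QQ map_mx1 mulmx1.
rewrite {1}XE !map_mxM -mulmxBl -mulmxBr !det_mulmx mulrC mulrA -det_mulmx.
by rewrite -map_mxM (unitarymx_mul_adj Qu) map_mx1 det1 mul1r.
Qed.

Lemma eigvals_unitary_conj n (Q : 'M[C]_n) (l : 'rV[C]_n) : Q \is unitarymx ->
  perm_eq (eigvals (adjmx Q *m diag_mx l *m Q)) (row_seq l).
Proof.
move=> Qu; rewrite /eigvals; case: closed_field_poly_normal => r /=.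
rewrite char_poly_unitary_conj // (monicP (char_poly_monic _)) scale1r.
rewrite char_poly_trig ?diag_mx_is_trig // => charE.
apply: prod_XsubC_eq; rewrite -charE /row_seq big_map big_enum /=.
by apply: eq_bigr => i _; rewrite mxE eqxx mulr1n.
Qed.

Lemma sigma_gram n (Y Q : 'M[C]_n) (l : 'rV[C]_n) :
  psd_eigen_decomp (adjmx Y *m Y) Q l -> forall j : 'I_n, sigma Y j = sqrtC (l 0 j).
Proof.
case=> Qu YE l_ge0 l_mono j; rewrite /sigma /sigmas YE.
rewrite (sort_ge_eq (eigvals_unitary_conj l Qu)) ?sorted_row_seq //.
  by rewrite (nth_map 0) ?size_row_seq // nth_row_seq.
by apply/allP => x /mapP [i _ ->]; apply: ger0_real.
Qed.

Lemma sigma_psd n (B Q : 'M[C]_n) (l : 'rV[C]_n) :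
  psd_eigen_decomp B Q l -> forall j : 'I_n, sigma B j = l 0 j.
Proof.
move=> decomp; have [Qu BE l_ge0 l_mono] := decomp.
have l_real i : l 0 i \is Num.real by apply: ger0_real.
suff /sigma_gram sigmaE : psd_eigen_decomp (adjmx B *m B) Q (\row_i l 0 i ^+ 2).
  by move=> j; rewrite sigmaE mxE sqrCK.
split=> [||i|i j ij]; rewrite ?mxE ?exprn_ge0 ?ler_pXn2r ?nnegrE ?l_mono //.
rewrite BE !adjmxM adjmxK adjmx_real_diag // !mulmxA.
rewrite -[adjmx Q *m diag_mx l *m Q *m adjmx Q]mulmxA (unitarymx_mul_adj Qu).
rewrite mulmx1 -[adjmx Q *m diag_mx l *m diag_mx l]mulmxA mulmx_diag.
by congr (_ *m diag_mx _ *m _); apply/matrixP => i k; rewrite !mxE expr2.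
Qed.

End SortedSpectral.

Section GramDeterminants.
Variable C : numClosedFieldType.

Lemma psd_eigen_decomp_sqrt n (A Q : 'M[C]_n) (l : 'rV[C]_n) :
  psd_eigen_decomp A Q l -> exists L : 'M[C]_n, A = adjmx L *m L.
Proof.
case=> Qu -> l_ge0 _; set r := \row_i sqrtC (l 0 i).
have r_real i : r 0 i \is Num.real by rewrite mxE sqrtC_real.
exists (diag_mx r *m Q); rewrite adjmxM adjmx_real_diag // !mulmxA.
rewrite -[_ *m diag_mx r *m diag_mx r]mulmxA mulmx_diag.
by congr (_ *m diag_mx _ *m _); apply/matrixP => i j; rewrite !mxE -expr2 sqrtCK ord1.
Qed.

Lemma det_one_add_gram_ge1 m n (N : 'M[C]_(m, n)) : 1 <= \det (1%:M + adjmx N *m N).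
Proof.
have [Q [mu [Qu NE mu_ge0 _]]] := gram_psd_eigen_decomp N.
have -> : 1%:M + adjmx N *m N = adjmx Q *m diag_mx (\row_i (1 + mu 0 i)) *m Q.
  have -> : diag_mx (\row_i (1 + mu 0 i)) = 1%:M + diag_mx mu.
    by apply/matrixP => i j; rewrite !mxE; case: eqP; rewrite ?mulr1n ?mulr0n ?addr0.
  by rewrite NE mulmxDr mulmxDl mulmx1 unitarymx_adj_mul.
rewrite det_unitary_conj // det_diag.
apply: le_trans (_ : \prod_(i < n) (1 : C) <= _); first by rewrite big1.
by apply: ler_prod => i _; rewrite ler01 mxE lerDl mu_ge0.
Qed.

(* Positive definite case: conjugating by the inverse square root of the first
   summand reduces the claim to [det_one_add_gram_ge1]. *)
Lemma det_gram_le_add k n (Y R : 'M[C]_(k, n)) :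
  \det (Y *m adjmx Y) <= \det (Y *m adjmx Y + R *m adjmx R).
Proof.
set S := Y *m adjmx Y; set T := R *m adjmx R.
have STE : S + T = row_mx Y R *m adjmx (row_mx Y R).
  by rewrite adjmx_row_mx mul_row_col.
have [->|detS_neq0] := eqVneq (\det S) 0; first by rewrite STE det_gram_ge0.
have [Q [l decomp]] := gram_psd_eigen_decomp (adjmx Y).
have [L SE] := psd_eigen_decomp_sqrt decomp; rewrite adjmxK -/S in SE.
have detSE : \det S = `|\det L| ^+ 2 by rewrite SE det_mulmx det_adjmx normCKC.
have Lu : L \in unitmx.
  by rewrite unitmxE unitfE -normr_eq0 -(sqrf_eq0 `|_|) -detSE.
set K := invmx L.
have KSK : adjmx K *m S *m K = 1%:M.
  by rewrite SE mulmxA -adjmxM -mulmxA mulmxV // adjmx1 mulmx1.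
have := det_one_add_gram_ge1 (adjmx R *m K).
have -> : 1%:M + adjmx (adjmx R *m K) *m (adjmx R *m K) = adjmx K *m (S + T) *m K.
  by rewrite -KSK mulmxDr mulmxDl adjmxM adjmxK !mulmxA.
have detKSK : `|\det K| ^+ 2 * \det S = 1 by rewrite -det_adj_conj KSK det1.
have detK_gt0 : 0 < `|\det K| ^+ 2.
  by rewrite exprn_gt0 // normr_gt0 det_inv invr_eq0 -unitfE -unitmxE.
by rewrite det_adj_conj -detKSK ler_pM2l.
Qed.

Lemma det_mul_adj_eq0 k n (Y Z : 'M[C]_(k, n)) :
  \det (Y *m adjmx Y) = 0 -> \det (Y *m adjmx Z) = 0.
Proof.
move=> /eqP/det0P [x x_neq0 xYY].
have xY : x *m Y = 0.
  apply/eqP; rewrite -mul_adjmx_row_eq0 adjmxM !mulmxA.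
  by rewrite -[x *m Y *m adjmx Y]mulmxA xYY mul0mx mxE.
by apply/eqP/det0P; exists x => //; rewrite mulmxA xY mul0mx.
Qed.

(* Write Z = G Y + R with the rows of R orthogonal to those of Y. *)
Lemma det_cauchy_schwarz k n (Y Z : 'M[C]_(k, n)) :
  `|\det (Y *m adjmx Z)| ^+ 2 <= \det (Y *m adjmx Y) * \det (Z *m adjmx Z).
Proof.
set S := Y *m adjmx Y.
have [detS0|detS_neq0] := eqVneq (\det S) 0.
  by rewrite detS0 det_mul_adj_eq0 // normr0 expr0n mul0r.
have Su : S \in unitmx by rewrite unitmxE unitfE.
set G := Z *m adjmx Y *m invmx S; set R := Z - G *m Y.
have RY : R *m adjmx Y = 0 by rewrite /R mulmxBl -mulmxA -/S /G mulmxKV // subrr.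
have YR : Y *m adjmx R = 0 by rewrite -[Y]adjmxK -adjmxM RY adjmx0.
have ZE : Z = G *m Y + R by rewrite /R addrC subrK.
have YZE : Y *m adjmx Z = S *m adjmx G.
  by rewrite [in LHS]ZE adjmxD mulmxDr YR addr0 adjmxM mulmxA.
have ZZE : Z *m adjmx Z = G *m Y *m adjmx (G *m Y) + R *m adjmx R.
  rewrite [in LHS]ZE adjmxD mulmxDl !mulmxDr -[G *m Y *m adjmx R]mulmxA YR mulmx0.
  by rewrite adjmxM [R *m (_ *m _)]mulmxA RY mul0mx addr0 add0r.
have := det_gram_le_add (G *m Y) R.
rewrite -ZZE adjmxM !mulmxA -[G *m Y *m adjmx Y]mulmxA -/S -{1}(adjmxK G).
rewrite det_adj_conj det_adjmx norm_conjC => le_ZZ.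
rewrite YZE det_mulmx det_adjmx normrM norm_conjC exprMn ger0_norm ?det_gram_ge0 //.
by rewrite expr2 -mulrA [_ * (_ ^+ 2)]mulrC ler_wpM2l ?det_gram_ge0.
Qed.

End GramDeterminants.

Lemma capmx_nz_row (F : fieldType) m1 m2 n (S1 : 'M[F]_(m1, n)) (S2 : 'M[F]_(m2, n)) :
  (n < \rank S1 + \rank S2)%N ->
  exists2 x : 'rV[F]_n, x != 0 & (x <= S1)%MS && (x <= S2)%MS.
Proof.
move=> rank_gt; exists (nz_row (S1 :&: S2)%MS).
  rewrite nz_row_eq0 -mxrank_eq0 -lt0n.
  have := mxrank_sum_cap S1 S2; have := rank_leq_col (S1 + S2)%MS.
  by move: (\rank (S1 + S2)%MS) (\rank (S1 :&: S2)%MS) => a b; lia.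
by rewrite !(submx_trans (nz_row_sub _)) ?capmxSl ?capmxSr.
Qed.

Section Interlacing.
Variable C : numClosedFieldType.

Lemma mul_row_pid_mx n r (a : 'rV[C]_n) (i : 'I_n) :
  (a *m pid_mx r) 0 i = if (i < r)%N then a 0 i else 0.
Proof.
rewrite mxE (bigD1 i) //= big1 ?addr0.
  by rewrite mxE eqxx /=; case: ifP => _; rewrite ?mulr1 ?mulr0.
move=> j ji; rewrite mxE; case: eqP => [/val_inj ij|_]; last by rewrite mulr0.
by rewrite ij eqxx in ji.
Qed.

Lemma mul_row_copid_mx n r (a : 'rV[C]_n) (i : 'I_n) :
  (a *m copid_mx r) 0 i = if (i < r)%N then 0 else a 0 i.
Proof.
rewrite /copid_mx mulmxBr mulmx1 [LHS]mxE [X in _ + X]mxE mul_row_pid_mx.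
by case: ifP => _; rewrite ?subrr ?subr0.
Qed.

Lemma quad_diag_row_le n (l x : 'rV[C]_n) (j : 'I_n) :
  (forall i j : 'I_n, (i <= j)%N -> l 0 j <= l 0 i) ->
  (forall i : 'I_n, (i < j)%N -> x 0 i = 0) ->
  (x *m diag_mx l *m adjmx x) 0 0 <= l 0 j * (x *m adjmx x) 0 0.
Proof.
move=> l_mono x_head; rewrite quad_diag_row mul_adjmx_diag_entry mulr_sumr.
apply: ler_sum => i _; have [ij|ji] := ltnP i j.
  by rewrite x_head // normr0 expr0n /= !mulr0.
by rewrite ler_wpM2r ?exprn_ge0 ?l_mono.
Qed.

Lemma quad_diag_row_ge n (l x : 'rV[C]_n) (j : 'I_n) :
  (forall i j : 'I_n, (i <= j)%N -> l 0 j <= l 0 i) ->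
  (forall i : 'I_n, (j < i)%N -> x 0 i = 0) ->
  l 0 j * (x *m adjmx x) 0 0 <= (x *m diag_mx l *m adjmx x) 0 0.
Proof.
move=> l_mono x_tail; rewrite quad_diag_row mul_adjmx_diag_entry mulr_sumr.
apply: ler_sum => i _; have [ji|ij] := ltnP j i.
  by rewrite x_tail // normr0 expr0n /= !mulr0.
by rewrite ler_wpM2r ?exprn_ge0 ?l_mono.
Qed.

Lemma quad_mulmx m n p (a : 'M[C]_(m, n)) (U : 'M[C]_(n, p)) (B : 'M[C]_p) :
  a *m U *m B *m adjmx (a *m U) = a *m (U *m B *m adjmx U) *m adjmx a.
Proof. by rewrite adjmxM !mulmxA. Qed.

Lemma mulmx_unitary_adj m n p (a : 'M[C]_(m, n)) (U : 'M[C]_(n, p)) :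
  U \is unitarymx -> a *m U *m adjmx (a *m U) = a *m adjmx a.
Proof. by move=> Uu; rewrite adjmxM mulmxA -(mulmxA a) (unitarymx_mul_adj Uu) mulmx1. Qed.

(* Cauchy interlacing, via a vector in the span of the first j+1 eigenvectors of
   the compression and of the last n-j eigenvectors of B. *)
Lemma interlacing k n (k_le_n : (k <= n)%N) (B Q : 'M[C]_n) (l : 'rV[C]_n)
    (U : 'M[C]_(k, n)) (R : 'M[C]_k) (mu : 'rV[C]_k) :
  psd_eigen_decomp B Q l -> U \is unitarymx ->
  psd_eigen_decomp (U *m B *m adjmx U) R mu ->
  forall j : 'I_k, mu 0 j <= l 0 (widen_ord k_le_n j).
Proof.
case=> Qu BE _ l_mono Uu [Ru UBUE _ mu_mono] j.
set j' := widen_ord k_le_n j; set RU := R *m U.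
have RUu : RU \is unitarymx := mul_unitarymx Ru Uu.
have RUBE : RU *m B *m adjmx RU = diag_mx mu.
  rewrite quad_mulmx UBUE !mulmxA (unitarymx_mul_adj Ru) mul1mx.
  by rewrite -mulmxA (unitarymx_mul_adj Ru) mulmx1.
have QBE : Q *m B *m adjmx Q = diag_mx l.
  rewrite BE !mulmxA (unitarymx_mul_adj Qu) mul1mx.
  by rewrite -mulmxA (unitarymx_mul_adj Qu) mulmx1.
have rank_gt : (n < \rank ((pid_mx j.+1 : 'M_k) *m RU) + \rank (copid_mx j' *m Q))%N.
  have [RU_free Q_free] : row_free RU /\ row_free Q.
    by rewrite /row_free !mxrank_unitary.
  have j_lt_k := ltn_ord j.
  rewrite (mxrankMfree _ RU_free) (mxrankMfree _ Q_free) rank_pid_mx // rank_copid_mx /=.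
    by lia.
  by rewrite /= ltnW // (leq_trans _ k_le_n).
have [x x_neq0 /andP [/submxP [a xE] /submxP [b xE']]] := capmx_nz_row rank_gt.
rewrite mulmxA in xE; rewrite mulmxA in xE'.
have xx_gt0 := mul_adjmx_row_gt0 x_neq0.
rewrite -(ler_pM2r xx_gt0); apply: le_trans (_ : (x *m B *m adjmx x) 0 0 <= _).
  rewrite xE quad_mulmx RUBE mulmx_unitary_adj //.
  by apply: quad_diag_row_ge => // i ji; rewrite mul_row_pid_mx ltnNge ji.
rewrite xE' quad_mulmx QBE mulmx_unitary_adj //.
by apply: quad_diag_row_le => // i ij; rewrite mul_row_copid_mx ij.
Qed.

Lemma det_compression_le k n (k_le_n : (k <= n)%N) m (P : 'M[C]_(m, n))
    (Q : 'M[C]_n) (l : 'rV[C]_n) (U : 'M[C]_(k, n)) :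
  psd_eigen_decomp (adjmx P *m P) Q l -> U \is unitarymx ->
  \det (U *m (adjmx P *m P) *m adjmx U) <= \prod_(j < k) l 0 (widen_ord k_le_n j).
Proof.
move=> decomp Uu; have [R [mu decompU]] := gram_psd_eigen_decomp (P *m adjmx U).
rewrite adjmxM adjmxK !mulmxA -[U *m adjmx P *m P]mulmxA in decompU.
rewrite (det_psd_eigen_decomp decompU); apply: ler_prod => j _.
have [_ _ mu_ge0 _] := decompU.
by rewrite mu_ge0 (interlacing k_le_n decomp Uu decompU).
Qed.

End Interlacing.

Section SingularValueProducts.
Variable C : numClosedFieldType.

Lemma mxsub_diag m n (f : 'I_m -> 'I_n) (l : 'rV[C]_n) : injective f ->
  mxsub f f (diag_mx l) = diag_mx (\row_i l 0 (f i)).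
Proof. by move=> f_inj; apply/matrixP => i j; rewrite !mxE (inj_eq f_inj). Qed.

Lemma rowsub_quad m n (f : 'I_m -> 'I_n) (Q M : 'M[C]_n) :
  rowsub f Q *m M *m adjmx (rowsub f Q) = mxsub f f (Q *m M *m adjmx Q).
Proof.
apply/matrixP => i j; rewrite !mxE; apply: eq_bigr => r _; rewrite !mxE.
by congr (_ * _); apply: eq_bigr => s _; rewrite !mxE.
Qed.

(* The rows of W and V are the first k left and right singular vectors of A. *)
Lemma svd_truncation k n (k_le_n : (k <= n)%N) (A Q : 'M[C]_n) (l : 'rV[C]_n) :
  psd_eigen_decomp (adjmx A *m A) Q l ->
  (forall j : 'I_k, 0 < l 0 (widen_ord k_le_n j)) ->
  exists W V : 'M[C]_(k, n), [/\ W \is unitarymx, V \is unitarymx &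
    W *m A *m adjmx V = diag_mx (\row_j sqrtC (l 0 (widen_ord k_le_n j)))].
Proof.
case=> Qu AE _ _ l_gt0; set f := widen_ord k_le_n.
have f_inj : injective f by move=> i j /(congr1 val) ij; apply: val_inj.
set V := rowsub f Q; set s := \row_j sqrtC (l 0 (f j)).
have VE M : V *m M *m adjmx V = mxsub f f (Q *m M *m adjmx Q) by rewrite rowsub_quad.
have Vu : V \is unitarymx.
  apply/unitarymx_adjP; have := VE 1%:M; rewrite !mulmx1 (unitarymx_mul_adj Qu) => ->.
  by apply/matrixP=> i j; rewrite !mxE (inj_eq f_inj).
have VAAV : V *m (adjmx A *m A) *m adjmx V = diag_mx s *m diag_mx s.
  rewrite VE AE !mulmxA (unitarymx_mul_adj Qu) mul1mx -mulmxA (unitarymx_mul_adj Qu).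
  rewrite mulmx1 mxsub_diag // mulmx_diag; congr diag_mx.
  by apply/matrixP=> i j; rewrite !mxE -expr2 sqrtCK.
have s_neq0 j : sqrtC (l 0 (f j)) != 0 by rewrite sqrtC_eq0 lt0r_neq0.
set si := \row_j (s 0 j)^-1.
have si_real j : si 0 j \is Num.real.
  by rewrite /si /s !mxE realV sqrtC_real //; apply/ltW/l_gt0.
have si_s : diag_mx si *m diag_mx s = 1%:M.
  by rewrite mulmx_diag; apply: diag_mx_eq1 => j; rewrite /si !mxE mulVf.
exists (diag_mx si *m V *m adjmx A), V; split => //.
  apply/unitarymx_adjP; rewrite !adjmxM adjmxK adjmx_real_diag //.
  transitivity (diag_mx si *m (V *m (adjmx A *m A) *m adjmx V) *m diag_mx si).
    by rewrite !mulmxA.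
  rewrite VAAV mulmxA si_s mul1mx.
  by rewrite mulmx_diag; apply: diag_mx_eq1 => j; rewrite /si !mxE mulfV.
transitivity (diag_mx si *m (V *m (adjmx A *m A) *m adjmx V)); first by rewrite !mulmxA.
by rewrite VAAV mulmxA si_s mul1mx.
Qed.

Lemma det_compression_adj_unitary_le k n (k_le_n : (k <= n)%N) (P U Q : 'M[C]_n)
    (l : 'rV[C]_n) (W V : 'M[C]_(k, n)) :
  psd_eigen_decomp (adjmx P *m P) Q l -> U \is unitarymx ->
  W \is unitarymx -> V \is unitarymx ->
  `|\det (W *m (adjmx P *m U *m P) *m adjmx V)| ^+ 2
    <= (\prod_(j < k) l 0 (widen_ord k_le_n j)) ^+ 2.
Proof.
move=> decomp Uu Wu Vu; set Y := W *m adjmx P *m U; set Z := V *m adjmx P.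
have -> : W *m (adjmx P *m U *m P) *m adjmx V = Y *m adjmx Z.
  by rewrite adjmxM adjmxK !mulmxA.
have YYE : Y *m adjmx Y = W *m (adjmx P *m P) *m adjmx W.
  by rewrite mulmx_unitary_adj // adjmxM adjmxK !mulmxA.
have ZZE : Z *m adjmx Z = V *m (adjmx P *m P) *m adjmx V.
  by rewrite adjmxM adjmxK !mulmxA.
apply: le_trans (det_cauchy_schwarz Y Z) _; rewrite expr2.
apply: ler_pM; rewrite ?det_gram_ge0 //.
- by rewrite YYE (det_compression_le _ decomp).
- by rewrite ZZE (det_compression_le _ decomp).
Qed.

Lemma prod_sigma_adj_unitary_le n (P U : 'M[C]_n) k : (k <= n)%N -> U \is unitarymx ->
  \prod_(j < k) sigma (adjmx P *m U *m P) j <= \prod_(j < k) sigma (adjmx P *m P) j.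
Proof.
move=> k_le_n Uu; set A := adjmx P *m U *m P; pose f := widen_ord k_le_n.
have [QB [lB decompB]] := gram_psd_eigen_decomp P.
have [QA [lA decompA]] := gram_psd_eigen_decomp A.
have -> : \prod_(j < k) sigma (adjmx P *m P) j = \prod_(j < k) lB 0 (f j).
  by apply: eq_bigr => j _; apply: (sigma_psd decompB (f j)).
have -> : \prod_(j < k) sigma A j = \prod_(j < k) sqrtC (lA 0 (f j)).
  by apply: eq_bigr => j _; apply: (sigma_gram decompA (f j)).
have lB_ge0 : 0 <= \prod_(j < k) lB 0 (f j).
  by case: decompB => _ _ lB_ge0 _; apply: prodr_ge0.
have [_ _ lA_ge0 _] := decompA.
have [/forallP lA_gt0|/forallPn [j lAj]] := boolP [forall j, 0 < lA 0 (f j)]; last first.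
  have /eqP lAj0 : lA 0 (f j) == 0.
    by move: (lA_ge0 (f j)); rewrite le0r (negbTE lAj) orbF.
  by rewrite (bigD1 j) //= lAj0 sqrtC0 mul0r.
have [W [V [Wu Vu WAV]]] := svd_truncation decompA lA_gt0.
have detE : \prod_(j < k) sqrtC (lA 0 (f j)) = \det (W *m A *m adjmx V).
  by rewrite WAV det_diag; apply: eq_bigr => j _; rewrite mxE.
have sqrt_ge0 : 0 <= \prod_(j < k) sqrtC (lA 0 (f j)).
  by apply: prodr_ge0 => j _; rewrite sqrtC_ge0 lA_ge0.
rewrite -(ler_pXn2r (_ : 0 < 2)%N) ?nnegrE //.
by have := det_compression_adj_unitary_le k_le_n decompB Uu Wu Vu; rewrite -detE ger0_norm.
Qed.

Lemma diag_mx_polar n (d : 'rV[C]_n) : exists e u : 'rV[C]_n,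
  [/\ diag_mx u \is unitarymx, adjmx (diag_mx e) = diag_mx e,
      diag_mx d = diag_mx e *m diag_mx u *m diag_mx e &
      diag_mx (map_mx (fun z : C => `|z|) d) = diag_mx e *m diag_mx e].
Proof.
pose e := \row_i sqrtC `|d 0 i|.
pose u := \row_i (if d 0 i == 0 then 1 else d 0 i / `|d 0 i|).
have sqrtK i : sqrtC `|d 0 i| * sqrtC `|d 0 i| = `|d 0 i| by rewrite -expr2 sqrtCK.
exists e, u; split.
- apply/unitarymx_adjP; rewrite adjmx_diag mulmx_diag.
  apply: diag_mx_eq1 => i; rewrite !mxE -normCK.
  case: eqP => [_|/eqP d_neq0]; first by rewrite normr1 expr1n.
  by rewrite normf_div normr_id divff ?expr1n // normr_eq0.
- by apply: adjmx_real_diag => i; rewrite mxE sqrtC_real.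
- rewrite !mulmx_diag; congr diag_mx; apply/matrixP => i j.
  rewrite (ord1 i) !mxE mulrAC sqrtK.
  case: eqP => [->|/eqP d_neq0]; first by rewrite normr0 mul0r.
  by rewrite mulrC divfK // normr_eq0.
- by rewrite mulmx_diag; congr diag_mx; apply/matrixP => i j; rewrite (ord1 i) !mxE sqrtK.
Qed.

End SingularValueProducts.

Unset Implicit Arguments. Set Strict Implicit. Set Printing Implicit Defensive.

Theorem lemma2p1 (C : numClosedFieldType) (n : nat) (d : 'rV[C]_n)
    (X : 'M[C]_n) (k : nat) :
  (1 <= k <= n)%N ->
  \prod_(j < k) sigma (adjmx X *m diag_mx d *m X) j
    <= \prod_(j < k) sigma (adjmx X *m diag_mx (map_mx (fun z : C => `|z|) d) *m X) j.
Proof.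
move=> /andP [_ k_le_n].
have [e [u [u_unitary e_adj dE absE]]] := diag_mx_polar d.
set P := diag_mx e *m X; rewrite dE absE.
have -> : adjmx X *m (diag_mx e *m diag_mx u *m diag_mx e) *m X
    = adjmx P *m diag_mx u *m P by rewrite adjmxM e_adj !mulmxA.
have -> : adjmx X *m (diag_mx e *m diag_mx e) *m X = adjmx P *m P.
  by rewrite adjmxM e_adj !mulmxA.
exact: prod_sigma_adj_unitary_le.
Qed.
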